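(* Let $S$ be a finite $p$-group, $Q\le S$ a characteristic subgroup with $C_S(Q)=Z(Q)$, and $\mathcal{F}$ a saturated fusion system on $S$. Then restriction to $Q$ induces group isomorphisms $\mathrm{Aut}_{\mathcal{F}}(S)/\mathrm{Aut}_{Z(Q)}(S)\cong N_{\mathrm{Aut}_{\mathcal{F}}(Q)}(\mathrm{Aut}_S(Q))$ and $\mathrm{Aut}_{\mathcal{F}}(S)/\mathrm{Aut}_{Q}(S)\cong N_{\mathrm{Out}_{\mathcal{F}}(Q)}(\mathrm{Out}_S(Q))$.
   Context: For subgroups $X\le S$ and $P\le S$ with $X$ normalising $P$, $\mathrm{Aut}_X(P)$ denotes the group of automorphisms of $P$ induced by conjugation by elements of $X$; $\mathrm{Out}_{\mathcal{F}}(Q)=\mathrm{Aut}_{\mathcal{F}}(Q)/\mathrm{Inn}(Q)$ and $\mathrm{Out}_S(Q)$ is the image of $\mathrm{Aut}_S(Q)$ in it. *)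

From mathcomp Require Import all_boot all_fingroup all_solvable.
Set Implicit Arguments.
Unset Strict Implicit.
Unset Printing Implicit Defensive.
Local Open Scope group_scope.

(* A "morphism" from P in a fusion system is represented by a finite function
   gT -> gT, normalised to be the identity outside its domain P. *)
Notation fmap gT := {ffun gT -> gT}.

Section FusionDefs.
Variable gT : finGroupType.
Implicit Types (P Q R S X : {set gT}) (f h : fmap gT).

Definition injhom P Q : {set fmap gT} :=
  [set f : fmap gT | [&& [forall x, (x \notin P) ==> (f x == x)],
              morphic P f, #|f @: P| == #|P| & f @: P \subset Q]].

Definition cmap P (g : gT) : fmap gT := [ffun x => if x \in P then x ^ g else x].

Definition HomS S P Q : {set fmap gT} := [set cmap P g | g in S & P :^ g \subset Q].

Definition fcomp P f h : fmap gT := [ffun x => if x \in P then h (f x) else x].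

Definition finv P f : fmap gT :=
  [ffun y => if y \in f @: P then odflt y [pick x in P | f x == y] else y].

(* Fusion system F on S : F P Q is the set Hom_F(P, Q). *)
Definition fusion_system S (F : {set gT} -> {set gT} -> {set fmap gT}) : Prop :=
  [/\ forall P Q : {group gT}, P \subset S -> Q \subset S ->
        HomS S P Q \subset F P Q /\ F P Q \subset injhom P Q,
      forall (P Q R : {group gT}) f h, P \subset S -> Q \subset S -> R \subset S ->
        f \in F P Q -> h \in F Q R -> fcomp P f h \in F P R &
      forall (P Q : {group gT}) f, P \subset S -> Q \subset S -> f \in F P Q ->
        f \in F P (f @: P) /\ finv P f \in F (f @: P) P].

Definition Fconj S F P Q : Prop := exists2 f, f \in (F P S : {set fmap gT}) & f @: P = Q.

Definition fully_normalized S F (P : {set gT}) : Prop :=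
  forall Q : {group gT}, Fconj S F P Q -> #|'N_S(Q)| <= #|'N_S(P)|.

Definition fully_centralized S F (P : {set gT}) : Prop :=
  forall Q : {group gT}, Fconj S F P Q -> #|'C_S(Q)| <= #|'C_S(P)|.

Definition AutX (P X : {set gT}) : {set {perm gT}} := conj_aut <<P>> @* X.

Definition AutF (F : {set gT} -> {set gT} -> {set fmap gT}) P : {set {perm gT}} :=
  [set a in Aut P | pval a \in F P P].

Definition Inn P := AutX P P.

(* N_phi = { g in N_S(P) | phi c_g phi^-1 in Aut_S(phi(P)) } *)
Definition Nphi S P f : {set gT} :=
  [set g in 'N_S(P) | [exists h in 'N_S(f @: P), [forall x in P, f (x ^ g) == f x ^ h]]].

Definition saturated (p : nat) S F : Prop :=
  fusion_system S F /\
  (forall P : {group gT}, P \subset S -> fully_normalized S F P ->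
     fully_centralized S F P /\ p.-Sylow(AutF F P) (AutX P S)) /\
  (forall (P : {group gT}) f, P \subset S -> f \in F P S ->
     fully_centralized S F (f @: P) ->
     exists2 g, g \in F (Nphi S P f) S & {in P, g =1 f}).

End FusionDefs.

From mathcomp Require Import all_boot all_fingroup all_solvable.
Set Implicit Arguments.
Unset Strict Implicit.
Unset Printing Implicit Defensive.
Local Open Scope group_scope.

(* Restriction a |-> a|_Q maps Aut_F(S) into N_{Aut_F(Q)}(Aut_S(Q)), because
   a c_g a^-1 restricts to c_{a g}. It is onto: if b normalises Aut_S(Q) then
   N_b = S, and Q, being normal in S, is fully normalised, hence fully
   centralised, so saturation extends b to an element of Aut_F(S).
   An automorphism a of S fixing Q pointwise sends s to s z with
   z in C_S(Q) <= Q fixed by a, so z^|a| = 1; hence a = 1 when |a| is prime to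
   p, and the kernel of the restriction is a normal p-subgroup of Aut_F(S).
   It thus lies in the Sylow subgroup Aut_S(S), and consists of conjugations by
   elements of C_S(Q) = Z(Q). Passing to the quotient by Inn(Q), whose
   preimage is Aut_Z(Q)(S) Aut_Q(S) = Aut_Q(S), gives the second isomorphism. *)

Section AutBasics.
Variable gT : finGroupType.
Implicit Types (P S Q : {group gT}) (b : {perm gT}).

Lemma AutXE P X : AutX P X = conj_aut P @* X.
Proof. by rewrite /AutX genGidG. Qed.

Lemma conj_aut_Aut P g : conj_aut P g \in Aut P.
Proof. exact: Aut_aut. Qed.

Lemma pval_Aut_im P b : b \in Aut P -> pval b @: P = P.
Proof. by rewrite pvalE inE => /andP[/im_perm_on]. Qed.

Lemma pval_conj_aut P g : g \in 'N(P) -> pval (conj_aut P g) = cmap P g.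
Proof.
move=> nPg; apply/ffunP=> x; rewrite ffunE pvalE.
by case: ifP => Px; [apply: norm_conj_autE | rewrite (out_Aut (conj_aut_Aut P g)) ?Px].
Qed.

Lemma conj_aut_conjgP P b g h : b \in Aut P -> g \in 'N(P) -> h \in 'N(P) ->
  conj_aut P g ^ b = conj_aut P h <-> {in P, forall x, b (x ^ g) = b x ^ h}.
Proof.
move=> Ab nPg nPh; split=> [Ecg x Px | Eb].
  have Pbx := Aut_closed Ab Px.
  have := congr1 (fun c : {perm gT} => c (b x)) Ecg.
  by rewrite /= conjgE !permM permK !norm_conj_autE.
apply: (eq_Aut (A := P)); rewrite ?groupJ ?conj_aut_Aut // => y Py.
have Pby : b^-1 y \in P by rewrite Aut_closed ?groupV.
by rewrite conjgE !permM !norm_conj_autE // Eb // permKV.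
Qed.

Lemma conj_autJ P b q : b \in Aut P -> q \in P ->
  conj_aut P q ^ b = conj_aut P (b q).
Proof.
move=> Ab Pq; have Pbq := Aut_closed Ab Pq.
apply/conj_aut_conjgP; rewrite ?(subsetP (normG P)) // => x Px.
by rewrite -(autmE Ab) morphJ.
Qed.

Lemma Aut_norm_Inn P : Aut P \subset 'N(Inn P).
Proof.
rewrite /Inn AutXE; apply/subsetP=> b Ab; rewrite inE.
apply/subsetP=> _ /imsetP[_ /morphimP[q _ Pq ->] ->].
by rewrite conj_autJ // mem_morphim ?(subsetP (normG P)) ?Aut_closed.
Qed.

Lemma injhom_Aut P f : f \in injhom P P -> exists2 a, a \in Aut P & pval a = f.
Proof.
rewrite inE => /and4P[/forallP fixf mf /eqP cardf sfP].
have injf : {in P &, injective f} by apply/imset_injP/eqP.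
exists (perm_in injf sfP).
  rewrite inE perm_in_on; apply/morphicP=> x y Px Py.
  by rewrite !perm_inE ?groupM //; apply: (morphicP mf).
apply/ffunP=> x; rewrite pvalE; case Px: (x \in P); first by rewrite perm_inE.
by rewrite (out_perm (perm_in_on _ _)) ?Px //; apply/esym/eqP/(implyP (fixf x)); rewrite Px.
Qed.

Lemma normal_fully_normalized S F P : S \subset 'N(P) -> fully_normalized S F P.
Proof.
by move=> nPS R _; rewrite (setIidPl nPS) subset_leq_card ?subsetIl.
Qed.

Lemma Nphi_norm_AutX S Q b :
  S \subset 'N(Q) -> b \in Aut Q -> b \in 'N(AutX Q S) -> Nphi S Q (pval b) = S.
Proof.
move=> nQS Ab nb; apply/setP=> g; rewrite inE pval_Aut_im // (setIidPl nQS) andb_idr // => Sg.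
have nQg := subsetP nQS g Sg.
have : conj_aut Q g ^ b \in AutX Q S by rewrite memJ_norm // AutXE mem_morphim.
rewrite AutXE => /morphimP[h nQh Sh /conj_aut_conjgP Eb].
apply/exists_inP; exists h => //; apply/forall_inP=> x Qx.
by rewrite !pvalE Eb.
Qed.

Lemma Aut_expg_translate S a s z n : a \in Aut S -> s \in S -> z \in S ->
  a s = s * z -> a z = z -> (a ^+ n) s = s * z ^+ n.
Proof.
move=> Aa Ss Sz Eas Eaz; elim: n => [|n IHn]; first by rewrite expg0 perm1 mulg1.
rewrite expgSr permM IHn -(autmE Aa) morphM ?groupX //= morphX //=.
by rewrite !autmE Eas Eaz expgS mulgA.
Qed.

End AutBasics.

Section CoprimeAutFixing.
Variables (gT : finGroupType) (p : nat) (S Q : {group gT}).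
Hypotheses (pS : p.-group S) (nsQS : Q <| S) (sCQ : 'C_S(Q) \subset Q).

Let sQS : Q \subset S := normal_sub nsQS.
Let nQS : S \subset 'N(Q) := normal_norm nsQS.

Lemma Aut_astab_mulg_cent a s : a \in Aut S -> a \in 'C(Q | 'P) -> s \in S ->
  s^-1 * a s \in 'C_S(Q).
Proof.
move=> Aa cQa Ss; rewrite inE groupM ?groupV ?Aut_closed //.
apply/centP=> y Qy; apply/commute_sym/commgP/conjg_fixP.
have fixQ x : x \in Q -> a x = x by move/(astab_act cQa).
have Qy' : y ^ s^-1 \in Q by rewrite memJ_norm ?groupV ?(subsetP nQS).
have Sy' := subsetP sQS _ Qy'.
by rewrite conjgM -{1}(fixQ _ Qy') -(autmE Aa) -morphJ //= autmE conjgKV fixQ.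
Qed.

Lemma p'elt_Aut_astab_eq1 a : a \in Aut S -> a \in 'C(Q | 'P) -> p^'.-elt a -> a = 1.
Proof.
move=> Aa cQa p'a; apply/permP=> s; rewrite perm1.
case Ss: (s \in S); last by rewrite (out_Aut Aa) ?Ss.
set z := s^-1 * a s.
have Qz : z \in Q := subsetP sCQ _ (Aut_astab_mulg_cent Aa cQa Ss).
have Sz := subsetP sQS _ Qz.
have Eas : a s = s * z by rewrite mulKVg.
have zn1 : z ^+ #[a] = 1.
  have := Aut_expg_translate #[a] Aa Ss Sz Eas (astab_act cQa Qz).
  by rewrite expg_order perm1 -{1}(mulg1 s) => /mulgI.
suff z1 : z = 1 by rewrite Eas z1 mulg1.
apply/eqP; rewrite -order_eq1; apply/eqP/(pnat_1 (mem_p_elt pS Sz)).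
by apply: pnat_dvd p'a; rewrite order_dvdn zn1.
Qed.

Lemma pgroup_Aut_astab : p.-group (Aut S :&: 'C(Q | 'P)).
Proof.
apply/pgroupP=> r r_pr /(Cauchy r_pr)[x /setIP[Ax cQx] ox]; apply/idPn=> p'r.
have p'x : p^'.-elt x by rewrite /p_elt ox pnatE.
by move: r_pr; rewrite -ox (p'elt_Aut_astab_eq1 Ax cQx p'x) order1.
Qed.

End CoprimeAutFixing.

Section RestrPermChar.
Variables (gT : finGroupType) (S Q : {group gT}).

Lemma char_Aut_astabs a : Q \char S -> a \in Aut S -> a \in 'N(Q | 'P).
Proof.
case/andP=> _ /forall_inP chQ Aa; rewrite !inE /=.
apply/subsetP=> x Qx; rewrite inE /= apermE.
exact: (subsetP (chQ a Aa)) _ (imset_f _ Qx).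
Qed.

Lemma restr_perm_conj_aut g : Q \subset S -> g \in S -> g \in 'N(Q) ->
  restr_perm Q (conj_aut S g) = conj_aut Q g.
Proof.
move=> sQS Sg nQg; have nSg := subsetP (normG S) g Sg.
have nQc : conj_aut S g \in 'N(Q | 'P).
  rewrite !inE /=; apply/subsetP=> x Qx.
  by rewrite inE /= apermE norm_conj_autE ?(subsetP sQS) ?memJ_norm.
apply: (eq_Aut (A := Q)); rewrite ?(Aut_restr_perm sQS) ?conj_aut_Aut //.
by move=> x Qx; rewrite restr_permE // !norm_conj_autE ?(subsetP sQS).
Qed.

Lemma conj_aut_restr_perm a g : Q \char S -> a \in Aut S -> g \in S ->
  conj_aut Q g ^ restr_perm Q a = conj_aut Q (a g).
Proof.
move=> chQ Aa Sg; have sQS := char_sub chQ; have nQS := char_norm chQ.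
have nQa := char_Aut_astabs chQ Aa.
apply/conj_aut_conjgP; rewrite ?(Aut_restr_perm sQS) ?(subsetP nQS) ?Aut_closed //.
move=> x Qx; rewrite !restr_permE ?memJ_norm ?(subsetP nQS) //.
by rewrite -(autmE Aa) morphJ // (subsetP sQS).
Qed.

End RestrPermChar.

Section FusionSystem.
Variables (gT : finGroupType) (S : {group gT}).
Variable F : {set gT} -> {set gT} -> {set {ffun gT -> gT}}.
Hypothesis fsF : fusion_system S F.
Implicit Types P R T : {group gT}.

Lemma cmap_Fhom P R g : P \subset S -> R \subset S -> g \in S -> P :^ g \subset R ->
  cmap P g \in F P R.
Proof.
move=> sPS sRS Sg sPgR; case: fsF => homF _ _.
have [sHomF _] := homF P R sPS sRS; apply: (subsetP sHomF).
by apply/imsetP; exists g; rewrite // inE Sg.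
Qed.

Lemma incl_Fhom P R : P \subset R -> R \subset S -> cmap P 1 \in F P R.
Proof.
move=> sPR sRS; apply: cmap_Fhom; rewrite ?group1 ?conjsg1 //.
exact: subset_trans sRS.
Qed.

Lemma Fhom_injhom P R f : P \subset S -> R \subset S -> f \in F P R -> f \in injhom P R.
Proof.
by move=> sPS sRS; case: fsF => homF _ _; case: (homF P R sPS sRS) => _ /subsetP; apply.
Qed.

Lemma Fhom_comp P R T f h : P \subset S -> R \subset S -> T \subset S ->
  f \in F P R -> h \in F R T -> fcomp P f h \in F P T.
Proof. by case: fsF => _ compF _; apply: compF. Qed.

Lemma Fhom_im P R f : P \subset S -> R \subset S -> f \in F P R -> f \in F P (f @: P).
Proof. by case: fsF => _ _ imF sPS sRS /(imF P R f sPS sRS)[]. Qed.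

Lemma AutF_group_set P : P \subset S -> group_set (AutF F P).
Proof.
move=> sPS; apply/group_setP; split.
  rewrite inE group1 /=; have -> : pval (1 : {perm gT}) = cmap P 1.
    by apply/ffunP=> x; rewrite ffunE pvalE perm1 conjg1; case: ifP.
  exact: incl_Fhom.
move=> a b /setIdP[Aa Fa] /setIdP[Ab Fb]; rewrite inE groupM //=.
have -> : pval (a * b) = fcomp P (pval a) (pval b).
  apply/ffunP=> x; rewrite ffunE !pvalE permM.
  by case: ifP => // /negbT Px; rewrite !(out_Aut _ Px).
exact: Fhom_comp Fa Fb.
Qed.

Canonical AutF_group P (sPS : P \subset S) := Group (AutF_group_set sPS).

Lemma AutF_Fhom P R b : P \subset R -> R \subset S -> b \in AutF F P -> pval b \in F P R.
Proof.
move=> sPR sRS /setIdP[Ab Fb]; have sPS := subset_trans sPR sRS.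
have -> : pval b = fcomp P (pval b) (cmap P 1).
  apply/ffunP=> x; rewrite !ffunE pvalE.
  case: ifP => [Px | /negbT Px]; last exact: out_Aut Ab Px.
  by rewrite Aut_closed // conjg1.
exact: (Fhom_comp sPS sPS sRS Fb (incl_Fhom sPR sRS)).
Qed.

Lemma conj_aut_AutF P g : P \subset S -> g \in S -> g \in 'N(P) -> conj_aut P g \in AutF F P.
Proof.
move=> sPS Sg nPg; rewrite inE conj_aut_Aut pval_conj_aut //.
by apply: cmap_Fhom; rewrite // (normP nPg).
Qed.

Lemma restr_perm_AutF P R a : R \subset P -> P \subset S ->
  a \in AutF F P -> a \in 'N(R | 'P) -> restr_perm R a \in AutF F R.
Proof.
move=> sRP sPS /setIdP[Aa Fa] nRa; have sRS := subset_trans sRP sPS.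
rewrite inE (Aut_restr_perm sRP Aa) /=.
have E : pval (restr_perm R a) = fcomp R (cmap R 1) (pval a).
  apply/ffunP=> x; rewrite !ffunE !pvalE; case: ifP => Rx.
    by rewrite restr_permE // Rx conjg1.
  by rewrite (out_perm (restr_perm_on R a)) ?Rx.
have FRP : pval (restr_perm R a) \in F R P.
  by rewrite E; exact: (Fhom_comp sRS sPS sPS (incl_Fhom sRP sPS) Fa).
by have := Fhom_im sRS sPS FRP; rewrite pvalE im_restr_perm.
Qed.

End FusionSystem.

Section RestrictionImage.
Variables (gT : finGroupType) (p : nat) (S Q : {group gT}).
Variable F : {set gT} -> {set gT} -> {set {ffun gT -> gT}}.
Hypotheses (chQ : Q \char S) (satF : saturated p S F).

Let sQS : Q \subset S := char_sub chQ.
Let nQS : S \subset 'N(Q) := char_norm chQ.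
Let fsF : fusion_system S F := satF.1.

Lemma AutF_sub_astabs : AutF F S \subset 'N(Q | 'P).
Proof. by apply/subsetP=> a /setIdP[Aa _]; apply: char_Aut_astabs chQ Aa. Qed.

Lemma restr_perm_AutF_norm a :
  a \in AutF F S -> restr_perm Q a \in 'N_(AutF F Q)(AutX Q S).
Proof.
move=> AFa; have [Aa _] := setIdP AFa.
rewrite inE (restr_perm_AutF fsF sQS (subxx S) AFa) ?(char_Aut_astabs chQ) //.
rewrite AutXE inE.
apply/subsetP=> _ /imsetP[_ /morphimP[g _ Sg ->] ->].
by rewrite (conj_aut_restr_perm chQ) // mem_morphim ?(subsetP nQS) ?Aut_closed.
Qed.

Lemma AutF_extend b : b \in 'N_(AutF F Q)(AutX Q S) ->
  exists2 a, a \in AutF F S & restr_perm Q a = b.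
Proof.
case/setIP=> AFb nb; have [Ab _] := setIdP AFb.
have fcQ : fully_centralized S F (pval b @: Q).
  rewrite pval_Aut_im //.
  exact: (satF.2.1 Q sQS (normal_fully_normalized nQS)).1.
have [g] := satF.2.2 Q (pval b) sQS (AutF_Fhom fsF sQS (subxx S) AFb) fcQ.
rewrite Nphi_norm_AutX // => Fg Egb.
have [a Aa Ea] := injhom_Aut (Fhom_injhom fsF (subxx S) (subxx S) Fg).
exists a; first by rewrite inE Aa Ea.
apply: (eq_Aut (A := Q)); rewrite ?(Aut_restr_perm sQS Aa) // => x Qx.
by rewrite restr_permE ?(char_Aut_astabs chQ) //; have := Egb x Qx; rewrite -Ea !pvalE.
Qed.

Lemma im_restr_perm_AutF : restr_perm Q @* AutF F S = 'N_(AutF F Q)(AutX Q S).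
Proof.
apply/eqP; rewrite eqEsubset; apply/andP; split.
  by apply/subsetP=> _ /morphimP[a _ AFa ->]; apply: restr_perm_AutF_norm.
apply/subsetP=> b /AutF_extend[a AFa <-].
by rewrite mem_morphim ?(subsetP AutF_sub_astabs).
Qed.

Lemma quotient_Inn_im_restr_perm_AutF :
  (restr_perm Q @* AutF F S) / Inn Q = 'N_(AutF F Q / Inn Q)(AutX Q S / Inn Q).
Proof.
rewrite im_restr_perm_AutF /Inn !AutXE; apply: quotient_subnormG.
exact: morphim_normal (char_normal chQ).
Qed.

End RestrictionImage.

Section RestrictionKernel.
Variables (gT : finGroupType) (p : nat) (S Q : {group gT}).
Variable F : {set gT} -> {set gT} -> {set {ffun gT -> gT}}.
Hypotheses (pS : p.-group S) (chQ : Q \char S) (CQ : 'C_S(Q) = 'Z(Q)).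
Hypothesis satF : saturated p S F.

Let sQS : Q \subset S := char_sub chQ.
Let nQS : S \subset 'N(Q) := char_norm chQ.
Let fsF : fusion_system S F := satF.1.
Let nQAF : AutF F S \subset 'N(Q | 'P) := AutF_sub_astabs F chQ.
Local Notation AFS := (AutF_group fsF (subxx S)).

Lemma ker_restr_perm_AutF : 'ker_(AutF F S) (restr_perm Q) = AutX S 'Z(Q).
Proof.
have nsKA : 'ker_AFS (restr_perm Q) <| AFS by rewrite -(ker_restrm nQAF) ker_normal.
have sKA : 'ker_(AutF F S) (restr_perm Q) \subset Aut S :&: 'C(Q | 'P).
  by rewrite ker_restr_perm setSI //; apply/subsetP=> a /setIdP[].
have sCQ : 'C_S(Q) \subset Q by rewrite CQ center_sub.
have pK : p.-group ('ker_AFS (restr_perm Q)).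
  exact: pgroupS sKA (pgroup_Aut_astab pS (char_normal chQ) sCQ).
have sylS := (satF.2.1 S (subxx S) (normal_fully_normalized (normG S))).2.
rewrite AutXE in sylS.
have sKI := normal_sub_max_pgroup (@Hall_max _ _ _ AFS sylS) pK nsKA.
rewrite AutXE; apply/eqP; rewrite eqEsubset; apply/andP; split.
  apply/subsetP=> a Ka; have /morphimP[g nSg Sg Ea] := subsetP sKI a Ka.
  have cQa : a \in 'C(Q | 'P) by rewrite -ker_restr_perm; case/setIP: Ka.
  apply/morphimP; exists g => //.
  rewrite -CQ inE Sg; apply/centP=> y Qy; apply/commute_sym/commgP/conjg_fixP.
  by rewrite -(norm_conj_autE nSg) ?(subsetP sQS) // -Ea; apply: (astab_act cQa).
rewrite ker_restr_perm; apply/subsetP=> _ /morphimP[z nSz Zz ->].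
have [Qz cQz] := setIP Zz.
rewrite inE (conj_aut_AutF fsF) ?(subsetP sQS) //=; apply/astabP=> y Qy.
by rewrite /= apermE norm_conj_autE ?(subsetP sQS) // /conjg -(centP cQz) ?mulKg.
Qed.

Lemma AutF_restr_perm_Inn : [set a in AutF F S | restr_perm Q a \in Inn Q] = AutX S Q.
Proof.
rewrite /Inn !AutXE; apply/eqP; rewrite eqEsubset; apply/andP; split; last first.
  apply/subsetP=> _ /morphimP[q _ Qq ->]; have Sq := subsetP sQS q Qq.
  rewrite inE (conj_aut_AutF fsF) ?(subsetP (normG S)) //=.
  by rewrite restr_perm_conj_aut ?mem_morphim ?(subsetP (normG Q)) ?(subsetP nQS).
apply/subsetP=> a /setIdP[AFa /morphimP[q _ Qq Ea]]; have Sq := subsetP sQS q Qq.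
have nSq := subsetP (normG S) q Sq.
have AFq : conj_aut S q \in AFS := conj_aut_AutF fsF (subxx S) Sq nSq.
have AFa' : a \in AFS := AFa.
have AFaq : a * (conj_aut S q)^-1 \in AFS by rewrite groupM ?groupV.
have : a * (conj_aut S q)^-1 \in AutX S 'Z(Q).
  rewrite -ker_restr_perm_AutF inE AFaq; apply/kerP; first exact: (subsetP nQAF).
  have nQa := subsetP nQAF a AFa; have nQq := subsetP nQAF _ AFq.
  rewrite morphM ?morphV ?groupV //=.
  by rewrite (restr_perm_conj_aut sQS Sq) ?(subsetP nQS) // Ea mulgV.
rewrite AutXE => /morphimP[z nSz Zz Ez].
have Qz := subsetP (center_sub Q) z Zz.
have -> : a = conj_aut S z * conj_aut S q by rewrite -Ez mulgKV.
by rewrite -morphM ?mem_morphim ?groupM.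
Qed.

Lemma AutF_quo_center_isog : (AutF F S / AutX S 'Z(Q)) \isog 'N_(AutF F Q)(AutX Q S).
Proof.
have := first_isog_loc (restr_perm_morphism Q) (nQAF : AFS \subset _).
by rewrite /= ker_restr_perm_AutF (im_restr_perm_AutF chQ satF).
Qed.

Lemma AutF_quo_Out_isog :
  (AutF F S / AutX S Q) \isog 'N_(AutF F Q / Inn Q)(AutX Q S / Inn Q).
Proof.
rewrite -(quotient_Inn_im_restr_perm_AutF chQ satF) /Inn (AutXE Q Q).
set InnQ := [group of conj_aut Q @* Q].
have nInnAF : AFS \subset restr_perm_morphism Q @*^-1 'N(InnQ).
  apply/subsetP=> a AFa; rewrite inE (subsetP nQAF) //= inE.
  have [AQa _] := setIdP (restr_perm_AutF_norm chQ satF AFa).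
  by have := subsetP (Aut_norm_Inn Q) _ (setIdP AQa).1; rewrite /Inn AutXE inE.
have := first_isog_loc
  (comp_morphism (restr_perm_morphism Q) (coset_morphism InnQ)) nInnAF.
rewrite morphim_comp /= ker_comp ker_coset.
suff -> : AutF F S :&: restr_perm_morphism Q @*^-1 InnQ = AutX S Q by [].
rewrite -AutF_restr_perm_Inn /Inn (AutXE Q Q); apply/setP=> a; rewrite in_setI [in RHS]inE.
case AFa: (a \in AutF F S) => //=.
by rewrite morphpreE in_setI (subsetP nQAF _ AFa) /= inE.
Qed.

End RestrictionKernel.

Theorem lemma2p2 (gT : finGroupType) (p : nat) (S Q : {group gT})
    (F : {set gT} -> {set gT} -> {set {ffun gT -> gT}}) :
  prime p -> p.-group S -> Q \char S -> 'C_S(Q) = 'Z(Q) -> saturated p S F ->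
  [/\ 'ker_(AutF F S) (restr_perm Q) = AutX S 'Z(Q),
      restr_perm Q @* AutF F S = 'N_(AutF F Q)(AutX Q S)
    & (AutF F S / AutX S 'Z(Q)) \isog 'N_(AutF F Q)(AutX Q S)] /\
  [/\ [set a in AutF F S | restr_perm Q a \in Inn Q] = AutX S Q,
      (restr_perm Q @* AutF F S) / Inn Q
        = 'N_(AutF F Q / Inn Q)(AutX Q S / Inn Q)
    & (AutF F S / AutX S Q) \isog 'N_(AutF F Q / Inn Q)(AutX Q S / Inn Q)].
Proof.
move=> _ pS chQ CQ satF; split; split.
- exact: ker_restr_perm_AutF pS chQ CQ satF.
- exact: im_restr_perm_AutF chQ satF.
- exact: AutF_quo_center_isog pS chQ CQ satF.
- exact: AutF_restr_perm_Inn pS chQ CQ satF.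
- exact: quotient_Inn_im_restr_perm_AutF chQ satF.
- exact: AutF_quo_Out_isog pS chQ CQ satF.
Qed.
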